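(* Let $\mathcal S$ be a non-degenerate affine zipper with signature $(0,\dots,0)$ whose matrices have dominated splitting of index-1 with multicone $M$. Then there exist integers $n,l,m\ge1$ and a word $\bar\jmath$ with $|\bar\jmath|=l$ such that $B_{n,l,m}\cap[\bar\jmath]=\emptyset$.
   Context: Affine zipper with signature $(0,\dots,0)$: $f_i(x)=A_ix+t_i$ ($i=0,\dots,N-1$) on $\mathbb R^d$, $A_i$ invertible, each $f_i$ a contraction, vertices $z_0,\dots,z_N$ with $f_i(z_0)=z_i$, $f_i(z_N)=z_{i+1}$; $\Gamma=\bigcup_if_i(\Gamma)$ the attractor. For a word $\bar\imath=i_1\dots i_k$: $A_{\bar\imath}=A_{i_1}\cdots A_{i_k}$, $f_{\bar\imath}=f_{i_1}\circ\dots\circ f_{i_k}$, $\Gamma_{\bar\imath}=f_{\bar\imath}(\Gamma)$. Dominated splitting of index-1: there is a nonempty open $M\subset\mathbb{PR}^{d-1}$ ($\langle w\rangle$ the line through $w\ne0$; projective action $\langle w\rangle\mapsto\langle Aw\rangle$) with finitely many components with pairwise disjoint closures, $\bigcup_iA_i\overline M\subset M^o$, and some hyperplane transverse to all elements of $\overline M$. For $x\in\mathbb R^d$, $M(x)=\{y\ne x:\langle y-x\rangle\in M\}$. Non-degenerate: there is a bounded open $U$ with $f_i(U)\cap f_j(U)=\emptyset$ ($i\ne j$), $\Gamma\cap U\ne\emptyset$, and $\langle z_N-z_0\rangle\notin\bigcap_{k\ge0}\bigcap_{|\bar\imath|=k}A_{\bar\imath}^{-1}(M^c)$. Symbolic: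 $\Sigma=\{0,\dots,N-1\}^{\mathbb N}$, $[\bar\jmath]$ the cylinder of sequences starting with $\bar\jmath$, $\mathbf i|_l=i_1\dots i_l$; $\Pi(\mathbf i)=\lim_nf_{i_1}\circ\dots\circ f_{i_n}(0)$. Sets $B_{n,l,m}$: for $n,l,m\ge1$, $B_{n,l,m}$ is the set of $\mathbf i\in\Sigma$ such that $\big(M(\Pi(\mathbf i))\setminus B_{1/n}(\Pi(\mathbf i))\big)\cap\big(\Gamma\setminus(\Gamma_{\mathbf i|_l}\cup\Gamma_{\mathbf i|_{l-1}(i_l-1)(N-1)^m}\cup\Gamma_{\mathbf i|_{l-1}(i_l+1)0^m})\big)=\emptyset$, where $B_r(x)$ is the open ball, $\mathbf i|_{l-1}(i_l-1)(N-1)^m$ is the word $i_1\dots i_{l-1}$ followed by the symbol $i_l-1$ and then $m$ copies of $N-1$ (similarly for the other word), and by convention $\Gamma_{\mathbf i|_{l-1}(i_l-1)(N-1)^m}=\emptyset$ if $i_l=0$, $\Gamma_{\mathbf i|_{l-1}(i_l+1)0^m}=\emptyset$ if $i_l=N-1$. *)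

From Stdlib Require Import Reals ClassicalEpsilon.
From Stdlib Require List.
From mathcomp Require Import ssreflect ssrfun ssrbool eqtype ssrnat seq fintype bigop.

Set Implicit Arguments.
Unset Strict Implicit.
Unset Printing Implicit Defensive.

Local Open Scope R_scope.

Definition Vec (d : nat) := 'I_d -> R.
Definition Mat (d : nat) := 'I_d -> 'I_d -> R.

Definition vzero (d : nat) : Vec d := fun _ => 0.
Definition vadd (d : nat) (x y : Vec d) : Vec d := fun i => x i + y i.
Definition vsub (d : nat) (x y : Vec d) : Vec d := fun i => x i - y i.
Definition vscale (d : nat) (c : R) (x : Vec d) : Vec d := fun i => c * x i.
Definition vdot (d : nat) (x y : Vec d) : R := \big[Rplus/0]_(i < d) (x i * y i).
Definition mv (d : nat) (A : Mat d) (x : Vec d) : Vec d :=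
  fun i => \big[Rplus/0]_(j < d) (A i j * x j).

Definition vnorm (d : nat) (x : Vec d) : R := sqrt (vdot x x).
Definition dist (d : nat) (x y : Vec d) : R := vnorm (vsub x y).
Definition is_open (d : nat) (U : Vec d -> Prop) : Prop :=
  forall x, U x -> exists e, 0 < e /\ forall y, dist y x < e -> U y.
Definition is_bounded (d : nat) (U : Vec d -> Prop) : Prop :=
  exists Rb, forall x, U x -> vnorm x <= Rb.
Definition is_compact (d : nat) (K : Vec d -> Prop) : Prop :=
  forall (I : Type) (V : I -> Vec d -> Prop),
    (forall i, is_open (V i)) -> (forall x, K x -> exists i, V i x) ->
    exists l : list I, forall x, K x -> exists i, List.In i l /\ V i x.

Definition invertible (d : nat) (A : Mat d) : Prop :=
  exists B : Mat d, forall x, mv B (mv A x) = x /\ mv A (mv B x) = x.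
Definition is_contraction (d : nat) (F : Vec d -> Vec d) : Prop :=
  exists c, 0 <= c < 1 /\ forall x y, dist (F x) (F y) <= c * dist x y.

Definition fmap (d : nat) (A : nat -> Mat d) (t : nat -> Vec d) (i : nat) (x : Vec d) : Vec d :=
  vadd (mv (A i) x) (t i).
(** fword w x = f_{w_1} ( f_{w_2} ( ... f_{w_k} x)) *)
Definition fword (d : nat) (A : nat -> Mat d) (t : nat -> Vec d) (w : seq nat) (x : Vec d) : Vec d :=
  foldr (fun i y => fmap A t i y) x w.
Definition Aword (d : nat) (A : nat -> Mat d) (w : seq nat) (v : Vec d) : Vec d :=
  foldr (fun i y => mv (A i) y) v w.
Definition Gword (d : nat) (A : nat -> Mat d) (t : nat -> Vec d) (G : Vec d -> Prop)
  (w : seq nat) : Vec d -> Prop :=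
  fun y => exists x, G x /\ y = fword A t w x.

(** Affine zipper with signature (0,...,0), vertices z_0..z_N. *)
Definition zipper0 (d N : nat) (A : nat -> Mat d) (t : nat -> Vec d) (z : nat -> Vec d) : Prop :=
  (forall i, (i < N)%N -> invertible (A i) /\ is_contraction (fmap A t i)) /\
  (forall i, (i < N)%N -> fmap A t i (z 0%N) = z i /\ fmap A t i (z N) = z i.+1).

Definition is_attractor (d N : nat) (A : nat -> Mat d) (t : nat -> Vec d) (G : Vec d -> Prop) : Prop :=
  (exists x, G x) /\ is_compact G /\
  (forall y, G y <-> exists i, (i < N)%N /\ exists x, G x /\ y = fmap A t i x).

(** Symbolic space: a sequence ii with ii k = i_{k+1}. *)
Definition inSigma (N : nat) (ii : nat -> nat) : Prop := forall k, (ii k < N)%N.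
Definition pref (ii : nat -> nat) (l : nat) : seq nat := mkseq ii l.
Definition cylinder (j : seq nat) (ii : nat -> nat) : Prop :=
  forall k, (k < size j)%N -> ii k = nth 0%N j k.

Definition converges (d : nat) (s : nat -> Vec d) (x : Vec d) : Prop :=
  forall e, 0 < e -> exists n0, forall n, (n0 <= n)%N -> dist (s n) x < e.
Definition Pi (d : nat) (A : nat -> Mat d) (t : nat -> Vec d) (ii : nat -> nat) : Vec d :=
  epsilon (inhabits (@vzero d))
    (fun x => converges (fun n => fword A t (pref ii n) (@vzero d)) x).

(** Subsets of projective space PR^{d-1} are encoded by cones: a set S of
    lines is encoded by C = { w <> 0 : <w> \in S }.  Open sets of PR^{d-1}
    correspond to open cones of R^d (quotient topology). *)
Definition is_cone (d : nat) (C : Vec d -> Prop) : Prop :=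
  (forall v, C v -> v <> @vzero d) /\ (forall v c, C v -> c <> 0 -> C (vscale c v)).
Definition open_cone (d : nat) (U : Vec d -> Prop) : Prop := is_cone U /\ is_open U.
Definition pclosure (d : nat) (C : Vec d -> Prop) : Vec d -> Prop :=
  fun w => w <> @vzero d /\ forall e, 0 < e -> exists v, C v /\ dist v w < e.
Definition pconnected (d : nat) (C : Vec d -> Prop) : Prop :=
  ~ exists U V : Vec d -> Prop,
      open_cone U /\ open_cone V /\
      (forall v, C v -> U v \/ V v) /\
      (exists v, C v /\ U v) /\ (exists v, C v /\ V v) /\
      (forall v, C v -> U v -> V v -> False).

Definition dominated_index1 (d N : nat) (A : nat -> Mat d) (Mc : Vec d -> Prop) : Prop :=
  open_cone Mc /\ (exists v, Mc v) /\
  (exists (k : nat) (Comp : nat -> Vec d -> Prop),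
     (forall j, (j < k)%N ->
        open_cone (Comp j) /\ (exists v, Comp j v) /\ pconnected (Comp j)) /\
     (forall v, Mc v <-> exists j, (j < k)%N /\ Comp j v) /\
     (forall j1 j2, (j1 < k)%N -> (j2 < k)%N -> j1 <> j2 ->
        forall v, pclosure (Comp j1) v -> pclosure (Comp j2) v -> False)) /\
  (* U_i A_i closure(M) \subset interior(M) = M *)
  (forall i, (i < N)%N -> forall v, pclosure Mc v -> Mc (mv (A i) v)) /\
  (exists phi : Vec d, forall v, pclosure Mc v -> vdot phi v <> 0).

Definition nondegenerate (d N : nat) (A : nat -> Mat d) (t : nat -> Vec d) (z : nat -> Vec d)
  (G : Vec d -> Prop) (Mc : Vec d -> Prop) : Prop :=
  (exists U : Vec d -> Prop,
     is_open U /\ is_bounded U /\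
     (forall i j, (i < N)%N -> (j < N)%N -> i <> j ->
        forall y, (exists x, U x /\ y = fmap A t i x) ->
                  (exists x, U x /\ y = fmap A t j x) -> False) /\
     (exists x, G x /\ U x)) /\
  (* <z_N - z_0> not in the intersection over all words w of A_w^{-1}(M^c) *)
  (exists w : seq nat, all (fun i => (i < N)%N) w /\ Mc (Aword A w (vsub (z N) (z 0%N)))).

Definition inB (d N : nat) (A : nat -> Mat d) (t : nat -> Vec d) (G : Vec d -> Prop)
  (Mc : Vec d -> Prop) (n l m : nat) (ii : nat -> nat) : Prop :=
  inSigma N ii /\
  let x := Pi A t ii in
  let il := ii l.-1 in
  forall y,
    Mc (vsub y x) ->                         (* y \in M(Pi(i)) *)
    ~ (dist y x < / INR n) ->
    G y ->
    ~ Gword A t G (pref ii l) y ->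
    ~ (il <> 0%N /\ Gword A t G (rcons (pref ii l.-1) il.-1 ++ nseq m N.-1) y) ->
    ~ (il <> N.-1 /\ Gword A t G (rcons (pref ii l.-1) il.+1 ++ nseq m 0%N) y) ->
    False.

(* Non-degeneracy gives a word [w] with [v = A_w (z_N - z_0)] in the open cone [M]; writing
   [p = f_w z_0] and [q = f_w z_N] we have [v = q - p].  Since [f_0] fixes [z_0], the maps
   [f_(w 0^k)] squeeze every bounded set into a small ball around [p] once [k] is large, so for
   [j = w 0^(k+1)] and every sequence [i] in the cylinder [[j]] the point [Pi i] and the sets
   [Gamma_j], [Gamma_(w 0^k 1 0)] lie near [p].  Since [f_(N-1)] fixes [z_N], the attractor has
   a point [y] near [q].  Then [y - Pi i] is close to [v], hence in [M] and longer than [1/n],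
   while [y] avoids the three competitor sets: [i] is not in [B_(n,l,1)]. *)

From HB Require Import structures.
From Stdlib Require Import Reals Lra ClassicalEpsilon FunctionalExtensionality.
From Stdlib Require List.
From mathcomp Require Import ssreflect ssrfun ssrbool eqtype ssrnat seq fintype bigop.

Set Implicit Arguments.
Unset Strict Implicit.
Unset Printing Implicit Defensive.

HB.instance Definition _ :=
  Monoid.isComLaw.Build R 0%R Rplus (fun a b c => esym (Rplus_assoc a b c)) Rplus_comm Rplus_0_l.

Local Open Scope R_scope.

Section RealSums.
Variable n : nat.
Implicit Types F H : 'I_n -> R.

Lemma big_Rmult_l c F : \big[Rplus/0]_(i < n) (c * F i) = c * \big[Rplus/0]_(i < n) F i.
Proof.
elim/big_rec2: _ => [|i y1 y2 _ ->]; first by rewrite Rmult_0_r.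
by rewrite Rmult_plus_distr_l.
Qed.

Lemma big_Rle F H : (forall i, F i <= H i) ->
  \big[Rplus/0]_(i < n) F i <= \big[Rplus/0]_(i < n) H i.
Proof. by move=> FH; elim/big_ind2: _ => //; [lra | move=> x1 x2 y1 y2; lra]. Qed.

Lemma big_Rge0 (P : pred 'I_n) F : (forall i, 0 <= F i) -> 0 <= \big[Rplus/0]_(i < n | P i) F i.
Proof. by move=> F0; elim/big_ind: _ => //; [lra | move=> x y; lra]. Qed.

Lemma big_Rle_term F j : (forall i, 0 <= F i) -> F j <= \big[Rplus/0]_(i < n) F i.
Proof.
move=> F0; rewrite (bigD1 j) //=; have := big_Rge0 (fun i => i != j) F0.
by rewrite -{1}[F j]Rplus_0_r; apply: Rplus_le_compat_l.
Qed.

Lemma big_Rle_const F a : (forall i, F i <= a) -> \big[Rplus/0]_(i < n) F i <= INR n * a.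
Proof.
move=> Fa; apply: Rle_trans (big_Rle Fa) _; rewrite big_const_ord.
by elim: n => [|k IH]; rewrite ?iterS ?S_INR /=; lra.
Qed.

Lemma big_sqr_le F :
  \big[Rplus/0]_(i < n) (F i * F i) <= (\big[Rplus/0]_(i < n) Rabs (F i)) ^ 2.
Proof.
suff [] : 0 <= \big[Rplus/0]_(i < n) Rabs (F i) /\
   \big[Rplus/0]_(i < n) (F i * F i) <= (\big[Rplus/0]_(i < n) Rabs (F i)) ^ 2 by [].
elim/big_rec2: _ => [|i y1 y2 _ [y2_ge0 le_y12]]; first by simpl; lra.
have := Rabs_pos (F i); have := Rsqr_abs (F i); rewrite /Rsqr => ->; nra.
Qed.
End RealSums.

Section EuclideanSpace.
Variable d : nat.
Implicit Types x y u : Vec d.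

Lemma vdot_ge0 x : 0 <= vdot x x.
Proof. by apply: big_Rge0 => i; apply: Rle_0_sqr. Qed.

Lemma vnorm_ge0 x : 0 <= vnorm x.
Proof. exact: sqrt_pos. Qed.

Lemma vnorm_sqr x : vnorm x * vnorm x = vdot x x.
Proof. exact/sqrt_sqrt/vdot_ge0. Qed.

Lemma vdot_quadratic (a : R) x y :
  \big[Rplus/0]_(i < d) ((a * x i + y i) * (a * x i + y i)) =
  a * a * vdot x x + 2 * a * vdot x y + vdot y y.
Proof. by rewrite /vdot -!big_Rmult_l -!big_split; apply: eq_bigr => i _ /=; ring. Qed.

(* The quadratic [a |-> |a x + y|^2] is nonnegative, so its discriminant is not positive. *)
Lemma vdot_le_vnorm x y : vdot x y <= vnorm x * vnorm y.
Proof.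
set a := vdot x x; set b := vdot x y; set c := vdot y y.
have quad_ge0 lam : 0 <= lam * lam * a + 2 * lam * b + c.
  by rewrite -vdot_quadratic; apply: big_Rge0 => i; apply: Rle_0_sqr.
have a_ge0 : 0 <= a by apply: vdot_ge0.
have c_ge0 : 0 <= c by apply: vdot_ge0.
have b2_le : b * b <= a * c.
  case: (Rle_lt_or_eq_dec _ _ a_ge0) => [a_gt0 | a0].
  - have := quad_ge0 (- b / a).
    have -> : (- b / a) * (- b / a) * a + 2 * (- b / a) * b + c = (a * c - b * b) / a.
      by field; lra.
    move=> /(Rmult_le_compat_r a _ _ (Rlt_le _ _ a_gt0)).
    by rewrite Rmult_0_l /Rdiv Rmult_assoc Rinv_l; lra.
  - case: (Req_dec b 0) => [-> | b_neq0]; first by rewrite -a0; lra.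
    have := quad_ge0 (- (c + 1) / (2 * b)); rewrite -a0.
    have -> : (- (c + 1) / (2 * b)) * (- (c + 1) / (2 * b)) * 0 +
              2 * (- (c + 1) / (2 * b)) * b + c = -1 by field.
    lra.
have := sqrt_le_1_alt _ _ b2_le; rewrite sqrt_Rsqr_abs sqrt_mult //.
by have := Rle_abs b; rewrite /vnorm -/a -/c; lra.
Qed.

Lemma vnorm_triangle x y : vnorm (vadd x y) <= vnorm x + vnorm y.
Proof.
have e : vdot (vadd x y) (vadd x y) = 1 * 1 * vdot x x + 2 * 1 * vdot x y + vdot y y.
  by rewrite -vdot_quadratic; apply: eq_bigr => i _; rewrite /vadd; ring.
have := vnorm_ge0 x; have := vnorm_ge0 y => x_ge0 y_ge0.
rewrite -[X in _ <= X]sqrt_square; last lra.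
apply: sqrt_le_1_alt; rewrite e -(vnorm_sqr x) -(vnorm_sqr y).
by have := vdot_le_vnorm x y; nra.
Qed.

Lemma coord_le_vnorm x i : Rabs (x i) <= vnorm x.
Proof.
rewrite -sqrt_Rsqr_abs; apply: sqrt_le_1_alt.
by apply: (@big_Rle_term d (fun i => x i * x i)) => k; apply: Rle_0_sqr.
Qed.

Lemma vnorm_le_sum_abs x : vnorm x <= \big[Rplus/0]_(i < d) Rabs (x i).
Proof.
have sum_ge0 := big_Rge0 xpredT (fun i => Rabs_pos (x i)).
rewrite /vnorm -[X in _ <= X]sqrt_square //; apply: sqrt_le_1_alt.
by have := big_sqr_le x; rewrite /= Rmult_1_r.
Qed.

Lemma vnorm_eq0 x : vnorm x = 0 -> x = @vzero d.
Proof.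
move=> x0; apply: functional_extensionality => i.
have := coord_le_vnorm x i; rewrite x0 /vzero; have := Rabs_pos (x i).
by case: (Rcase_abs (x i)) => hx; [rewrite Rabs_left | rewrite Rabs_right]; lra.
Qed.

Lemma dist_ge0 x y : 0 <= dist x y.
Proof. exact: vnorm_ge0. Qed.

Lemma dist_xx x : dist x x = 0.
Proof.
rewrite /dist /vnorm /vdot big1 ?sqrt_0 // => i _; rewrite /vsub; ring.
Qed.

Lemma dist_sym x y : dist x y = dist y x.
Proof. by rewrite /dist /vnorm; f_equal; apply: eq_bigr => i _; rewrite /vsub; ring. Qed.

Lemma dist_vsub x y u v : dist (vsub x y) (vsub u v) = vnorm (vadd (vsub x u) (vsub v y)).
Proof. by rewrite /dist; f_equal; apply: functional_extensionality => i; rewrite /vsub /vadd; ring. Qed.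

Lemma dist_triangle x y u : dist x u <= dist x y + dist y u.
Proof.
rewrite /dist; have -> : vsub x u = vadd (vsub x y) (vsub y u).
  by apply: functional_extensionality => i; rewrite /vsub /vadd; ring.
exact: vnorm_triangle.
Qed.

Lemma dist_vzero x : dist x (@vzero d) = vnorm x.
Proof. by rewrite /dist; f_equal; apply: functional_extensionality => i; rewrite /vsub /vzero; ring. Qed.

Lemma vnorm_le_dist x y : vnorm x <= vnorm y + dist x y.
Proof. by have := dist_triangle x y (@vzero d); rewrite !dist_vzero; lra. Qed.

Lemma dist_le_vnorm x y : dist x y <= vnorm x + vnorm y.
Proof.
by have := dist_triangle x (@vzero d) y; rewrite (dist_sym (@vzero d)) !dist_vzero; lra.
Qed.

Lemma dist_vsub_le x y u v : dist (vsub x y) (vsub u v) <= dist x u + dist y v.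
Proof. by rewrite dist_vsub (dist_sym y); apply: vnorm_triangle. Qed.
End EuclideanSpace.

Lemma pow_mul_eventually_lt c M eta : 0 <= c < 1 -> 0 < eta ->
  exists k0, forall k, (k0 <= k)%N -> c ^ k * M < eta.
Proof.
move=> c01 eta_gt0; have M1_gt0 : 0 < Rabs M + 1 by have := Rabs_pos M; lra.
have [k0 Hk0] := pow_lt_1_zero c ltac:(rewrite Rabs_right; lra) _ (Rdiv_lt_0_compat _ _ eta_gt0 M1_gt0).
exists k0 => k /leP /Hk0; have ck_ge0 := pow_le c k (proj1 c01).
rewrite Rabs_right => [ck_lt|]; last lra.
have := Rmult_lt_compat_r _ _ _ M1_gt0 ck_lt; rewrite /Rdiv Rmult_assoc Rinv_l; last lra.
by have := Rle_abs M; nra.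
Qed.

Definition is_word (N : nat) (w : seq nat) : bool := all (fun i => (i < N)%N) w.

Section AffineWords.
Variables (d : nat) (A : nat -> Mat d) (t : nat -> Vec d).

Lemma mv_vsub (M : Mat d) x y : mv M (vsub x y) = vsub (mv M x) (mv M y).
Proof.
apply: functional_extensionality => i; rewrite /mv /vsub.
have -> : \big[Rplus/0]_(j < d) (M i j * (x j - y j)) =
          \big[Rplus/0]_(j < d) (M i j * x j + (-1) * (M i j * y j)).
  by apply: eq_bigr => j _; ring.
by rewrite big_split big_Rmult_l /=; ring.
Qed.

Lemma fword_vsub w x y : vsub (fword A t w x) (fword A t w y) = Aword A w (vsub x y).
Proof.
elim: w => [|i w IH] //=; rewrite -IH mv_vsub.
by apply: functional_extensionality => k; rewrite /fmap /vsub /vadd; ring.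
Qed.

Lemma fword_cat u v x : fword A t (u ++ v) x = fword A t u (fword A t v x).
Proof. by rewrite /fword foldr_cat. Qed.

Lemma fword_nseq_fixed i k z : fmap A t i z = z -> fword A t (nseq k i) z = z.
Proof. by move=> fz; elim: k => [|k IH] //=; rewrite IH fz. Qed.

Lemma contraction_rate_uniform N : (forall i, (i < N)%N -> is_contraction (fmap A t i)) ->
  exists c, 0 <= c < 1 /\ forall i, (i < N)%N -> forall x y,
    dist (fmap A t i x) (fmap A t i y) <= c * dist x y.
Proof.
elim: N => [|N IH] contr; first by exists 0; split; [lra | move=> i].
have [c [c01 Hc]] := IH (fun i lt_iN => contr i (ltnW lt_iN)).
have [c' [c'01 Hc']] := contr N (ltnSn N).
exists (Rmax c c'); split; first by split; [apply: Rle_trans (Rmax_l _ _) | apply: Rmax_lub_lt]; lra.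
move=> i; rewrite ltnS leq_eqVlt => /orP [/eqP -> | lt_iN] x y.
- apply: Rle_trans (Hc' x y) _; exact/Rmult_le_compat_r/Rmax_r/dist_ge0.
- apply: Rle_trans (Hc i lt_iN x y) _; exact/Rmult_le_compat_r/Rmax_l/dist_ge0.
Qed.

Section Contraction.
Variables (N : nat) (c : R).
Hypothesis c01 : 0 <= c < 1.
Hypothesis Hc : forall i, (i < N)%N -> forall x y, dist (fmap A t i x) (fmap A t i y) <= c * dist x y.

Lemma fword_dist_le_pow w x y : is_word N w ->
  dist (fword A t w x) (fword A t w y) <= c ^ size w * dist x y.
Proof.
elim: w => [|i w IH] /=; first by lra.
move=> /andP [lt_iN w_word]; apply: Rle_trans (Hc lt_iN _ _) _.
by rewrite Rmult_assoc; apply: Rmult_le_compat_l; [lra | exact: IH].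
Qed.

Lemma fword_dist_le w x y : is_word N w -> dist (fword A t w x) (fword A t w y) <= dist x y.
Proof.
move=> /(fword_dist_le_pow x y); have := dist_ge0 x y.
by have := pow_incr c 1 (size w) ltac:(lra); rewrite pow1; nra.
Qed.

Lemma fword_nseq_dist_fixed i k a z : (i < N)%N -> fmap A t i z = z ->
  dist (fword A t (nseq k i) a) z <= c ^ k * dist a z.
Proof.
move=> lt_iN fz; have := @fword_dist_le_pow (nseq k i) a z.
by rewrite size_nseq (fword_nseq_fixed k fz); apply; rewrite /is_word all_nseq lt_iN orbT.
Qed.
End Contraction.
End AffineWords.

Section Attractor.
Variables (d N : nat) (A : nat -> Mat d) (t : nat -> Vec d) (G : Vec d -> Prop).
Hypothesis HG : is_attractor N A t G.

Lemma attractor_fword w x : is_word N w -> G x -> G (fword A t w x).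
Proof.
move=> + Gx; elim: w => [|i w IH] //= /andP [lt_iN w_word].
by apply/(proj2 (proj2 HG)); exists i; split=> //; exists (fword A t w x); split=> //; exact: IH.
Qed.

Lemma attractor_alphabet_nonempty : (0 < N)%N.
Proof.
have [g Gg] := proj1 HG.
by have [i [lt_iN _]] := proj1 (proj2 (proj2 HG) g) Gg; apply: leq_ltn_trans lt_iN.
Qed.

(* Compactness is used through the cover of R^d by the open balls of radius k around 0. *)
Lemma attractor_bounded : exists R0, forall x, G x -> vnorm x <= R0.
Proof.
case: (proj1 (proj2 HG) nat (fun k x => vnorm x < INR k)) => [k x x_lt | x _ | I_fin cover].
- exists (INR k - vnorm x); split; first lra.
  by move=> y y_near; have := vnorm_le_dist y x; lra.
- by have [k Hk] := INR_archimed 1 (vnorm x) Rlt_0_1; exists k; lra.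
exists (List.fold_right (fun k M => Rmax (INR k) M) 0 I_fin) => x Gx.
have [k [k_in x_lt]] := cover x Gx.
suff : INR k <= List.fold_right (fun k M => Rmax (INR k) M) 0 I_fin by lra.
elim: I_fin k_in {cover} => [|k' I_fin IH] //= [-> | k_in]; first exact: Rmax_l.
exact: Rle_trans (IH k_in) (Rmax_r _ _).
Qed.

Section Contraction.
Variable c : R.
Hypothesis c01 : 0 <= c < 1.
Hypothesis Hc : forall i, (i < N)%N -> forall x y, dist (fmap A t i x) (fmap A t i y) <= c * dist x y.

(* [f_w 0] stays within [dist 0 g] of the point [f_w g] of the attractor. *)
Lemma attractor_orbit_bounded : exists R0,
  (forall x, G x -> vnorm x <= R0) /\
  (forall w, is_word N w -> vnorm (fword A t w (@vzero d)) <= R0).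
Proof.
have [g Gg] := proj1 HG; have [R1 HR1] := attractor_bounded.
exists (R1 + vnorm g); split=> [x Gx | w w_word]; first by have := HR1 x Gx; have := vnorm_ge0 g; lra.
have := vnorm_le_dist (fword A t w (@vzero d)) (fword A t w g).
have := fword_dist_le c01 Hc (@vzero d) g w_word.
rewrite (dist_sym (@vzero d)) dist_vzero; have := HR1 _ (attractor_fword w_word Gg); lra.
Qed.

Lemma attractor_near_fixed_point i z eta : (i < N)%N -> fmap A t i z = z -> 0 < eta ->
  exists g, G g /\ dist g z < eta.
Proof.
move=> lt_iN fz eta_gt0; have [g0 Gg0] := proj1 HG.
have [k Hk] := pow_mul_eventually_lt (dist g0 z) c01 eta_gt0.
exists (fword A t (nseq k i) g0); split.
  by apply: attractor_fword Gg0; rewrite /is_word all_nseq lt_iN orbT.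
exact: Rle_lt_trans (fword_nseq_dist_fixed c01 Hc k g0 lt_iN fz) (Hk k (leqnn k)).
Qed.
End Contraction.
End Attractor.

Lemma ord_eventually n (P : 'I_n -> nat -> Prop) :
  (forall i, exists k0, forall k, (k0 <= k)%N -> P i k) ->
  exists k0, forall i k, (k0 <= k)%N -> P i k.
Proof.
move=> evP; pose k0 i := epsilon (inhabits 0%N) (fun k0 => forall k, (k0 <= k)%N -> P i k).
exists (\max_(i < n) k0 i) => i k le_k; apply: (epsilon_spec (inhabits 0%N) _ (evP i)).
exact: leq_trans (@leq_bigmax _ k0 i) le_k.
Qed.

Section Limits.
Variable d : nat.

Lemma cauchy_converges (s : nat -> Vec d) :
  (forall e, 0 < e -> exists k0, forall k k', (k0 <= k)%N -> (k0 <= k')%N -> dist (s k) (s k') < e) ->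
  exists L, converges s L.
Proof.
move=> s_cauchy.
have coord_cauchy i : Cauchy_crit (fun k => s k i).
  move=> e e_gt0; have [k0 Hk0] := s_cauchy e e_gt0; exists k0 => k k' /leP le_k /leP le_k'.
  exact: Rle_lt_trans (coord_le_vnorm (vsub (s k) (s k')) i) (Hk0 k k' le_k le_k').
pose L i := proj1_sig (R_complete _ (coord_cauchy i)).
exists L => e e_gt0.
have d1_gt0 : 0 < INR d + 1 by have := pos_INR d; lra.
have [k0 Hk0] : exists k0, forall i k, (k0 <= k)%N -> Rabs (s k i - L i) < e / (INR d + 1).
  apply: ord_eventually => i.
  have [k0 Hk0] := proj2_sig (R_complete _ (coord_cauchy i)) _ (Rdiv_lt_0_compat _ _ e_gt0 d1_gt0).
  by exists k0 => k /leP /Hk0.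
exists k0 => k le_k; apply: Rle_lt_trans (vnorm_le_sum_abs _) _.
apply: Rle_lt_trans (big_Rle_const (fun i => Rlt_le _ _ (Hk0 i k le_k))) _.
have -> : INR d * (e / (INR d + 1)) = e - e / (INR d + 1) by field; lra.
by have := Rdiv_lt_0_compat _ _ e_gt0 d1_gt0; lra.
Qed.

Lemma converges_dist_le (s : nat -> Vec d) x p D k0 :
  converges s x -> (forall k, (k0 <= k)%N -> dist (s k) p <= D) -> dist x p <= D.
Proof.
move=> sx sD; apply: Rnot_lt_le => D_lt.
have [k1 Hk1] := sx (dist x p - D) ltac:(lra).
have := Hk1 (maxn k0 k1) (leq_maxr _ _); have := sD (maxn k0 k1) (leq_maxl _ _).
have := dist_triangle x (s (maxn k0 k1)) p; rewrite (dist_sym x (s _)); lra.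
Qed.
End Limits.

Lemma pref_word N ii n : inSigma N ii -> is_word N (pref ii n).
Proof. by move=> ii_N; apply/allP => k /mapP [m _ ->]. Qed.

Lemma pref_cat ii n m : (n <= m)%N ->
  pref ii m = pref ii n ++ pref (fun k => ii (n + k)%N) (m - n).
Proof.
move=> le_nm; rewrite /pref /mkseq -{1}(subnKC le_nm) iotaD map_cat; congr (_ ++ _).
by rewrite add0n -{1}(addn0 n) iotaDl -map_comp.
Qed.

Lemma cylinder_pref j ii n : cylinder j ii -> (n <= size j)%N -> pref ii n = take n j.
Proof.
move=> j_ii le_n; apply: (@eq_from_nth _ 0%N); first by rewrite size_mkseq size_take_min (minn_idPl le_n).
move=> k; rewrite size_mkseq => lt_kn.
by rewrite nth_mkseq // nth_take //; apply: j_ii; exact: leq_trans lt_kn le_n.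
Qed.

Section Coding.
Variables (d N : nat) (A : nat -> Mat d) (t : nat -> Vec d) (c R0 : R).
Hypothesis c01 : 0 <= c < 1.
Hypothesis Hc : forall i, (i < N)%N -> forall x y, dist (fmap A t i x) (fmap A t i y) <= c * dist x y.
Hypothesis orbit_bounded : forall w, is_word N w -> vnorm (fword A t w (@vzero d)) <= R0.

Lemma Pi_converges ii : inSigma N ii ->
  converges (fun k => fword A t (pref ii k) (@vzero d)) (Pi A t ii).
Proof.
move=> ii_N; apply: epsilon_spec; apply: cauchy_converges => e e_gt0.
have [k0 Hk0] := pow_mul_eventually_lt R0 c01 e_gt0.
suff near_k0 k k' : (k0 <= k)%N -> (k <= k')%N ->
    dist (fword A t (pref ii k') (@vzero d)) (fword A t (pref ii k) (@vzero d)) < e.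
  exists k0 => k k' le_k le_k'; case/orP: (leq_total k k') => [le_kk' | le_k'k].
  - by rewrite dist_sym; exact: near_k0.
  - exact: near_k0.
move=> le_k le_kk'; rewrite (pref_cat ii le_kk') fword_cat.
apply: Rle_lt_trans (fword_dist_le_pow c01 Hc _ _ (pref_word k ii_N)) _.
rewrite size_mkseq dist_vzero.
have := orbit_bounded (pref_word (k' - k) (fun m => ii_N (k + m)%N)).
have := Hk0 k le_k; have := pow_le c k (proj1 c01); nra.
Qed.

Lemma Pi_dist_le ii l p D : inSigma N ii ->
  (forall a, vnorm a <= R0 -> dist (fword A t (pref ii l) a) p <= D) -> dist (Pi A t ii) p <= D.
Proof.
move=> ii_N prefix_near; apply: (converges_dist_le (k0 := l) (Pi_converges ii_N)) => k le_lk.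
rewrite (pref_cat ii le_lk) fword_cat; apply: prefix_near; apply: orbit_bounded.
exact: pref_word (fun m => ii_N (l + m)%N).
Qed.
End Coding.

Lemma open_nbhs_bounded_below d (U : Vec d -> Prop) v : is_open U -> U v -> v <> @vzero d ->
  exists (eta : R) (n : nat), 0 < eta /\ (1 <= n)%N /\
    forall u, dist u v <= 2 * eta -> U u /\ / INR n <= vnorm u.
Proof.
move=> U_open Uv v_neq0; have [e [e_gt0 ball_e]] := U_open v Uv.
have v_gt0 : 0 < vnorm v.
  by case: (Rle_lt_or_eq_dec _ _ (vnorm_ge0 v)) => // v0; case: v_neq0; exact: vnorm_eq0.
have [n [n_lt n_gt0]] := archimed_cor1 (vnorm v / 2) ltac:(lra).
exists (Rmin e (vnorm v) / 4), n; split; first by have := Rmin_glb_lt _ _ _ e_gt0 v_gt0; lra.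
split; first exact/leP.
move=> u u_near; have := Rmin_l e (vnorm v); have := Rmin_r e (vnorm v).
split; first by apply: ball_e; lra.
have := vnorm_le_dist v u; rewrite dist_sym; lra.
Qed.

Section CylinderMissesB.
Variables (d N : nat) (A : nat -> Mat d) (t : nat -> Vec d) (G Mc : Vec d -> Prop) (c R0 : R).
Hypothesis c01 : 0 <= c < 1.
Hypothesis Hc : forall i, (i < N)%N -> forall x y, dist (fmap A t i x) (fmap A t i y) <= c * dist x y.
Hypothesis HG : is_attractor N A t G.
Hypothesis G_bounded : forall x, G x -> vnorm x <= R0.
Hypothesis orbit_bounded : forall w, is_word N w -> vnorm (fword A t w (@vzero d)) <= R0.

Variables (w : seq nat) (p y : Vec d) (delta : R) (n k : nat).
Hypothesis Gy : G y.
Hypothesis n_gt0 : (1 <= n)%N.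
Hypothesis y_in_cone : forall x, dist x p <= delta -> Mc (vsub y x) /\ / INR n <= dist y x.
Hypothesis prefix_shrinks :
  forall a, vnorm a <= R0 -> dist (fword A t (w ++ nseq k 0%N) a) p <= delta.

(* [Pi ii] and the competitors [Gamma_(w 0^(k+1))] and [Gamma_(w 0^k 1 0)] all lie within [delta]
   of [p], which keeps them away from [y]; as [i_l = 0] there is no [i_l - 1] competitor. *)
Lemma cylinder_misses_B ii :
  inB N A t G Mc n (size w + k.+1) 1 ii -> cylinder (w ++ nseq k.+1 0%N) ii -> False.
Proof.
move=> [ii_N ii_B] ii_j; rewrite addnS /= in ii_B.
have split_j : w ++ nseq k.+1 0%N = (w ++ nseq k 0%N) ++ [:: 0%N] by rewrite -addn1 nseqD catA.
have size_j : size (w ++ nseq k.+1 0%N) = (size w + k).+1 by rewrite size_cat size_nseq addnS.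
have pref_j : pref ii (size w + k).+1 = w ++ nseq k.+1 0%N.
  by rewrite (cylinder_pref ii_j) ?size_j // -size_j take_size.
have pref_wk : pref ii (size w + k) = w ++ nseq k 0%N.
  rewrite (cylinder_pref ii_j) ?size_j // split_j take_cat size_cat size_nseq ltnn subnn.
  by rewrite take0 cats0.
have i_l : ii (size w + k)%N = 0%N.
  rewrite (ii_j (size w + k)%N) ?size_j // nth_cat ltnNge leq_addr /= addKn.
  by rewrite -[0%N :: _]/(nseq k.+1 0%N) nth_nseq ltnSn.
have N_gt0 : (0 < N)%N by apply: leq_ltn_trans (ii_N 0%N).
have near_p_ne_y x : dist x p <= delta -> x <> y.
  (* [y_in_cone] at [x = y] would give [/ n <= 0]. *)
  move=> x_near x_y; have := proj2 (y_in_cone x_near); rewrite x_y dist_xx.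
  by have := Rinv_0_lt_compat (INR n) (lt_0_INR _ (elimT leP n_gt0)); lra.
have image_near_p b : G b -> dist (fword A t (w ++ nseq k 0%N) b) p <= delta.
  by move=> Gb; exact/prefix_shrinks/G_bounded.
have x_near : dist (Pi A t ii) p <= delta.
  apply: (Pi_dist_le c01 Hc orbit_bounded (l := size w + k) ii_N) => a a_le.
  by rewrite pref_wk; exact: prefix_shrinks.
have [y_cone y_far] := y_in_cone x_near.
apply: (ii_B y y_cone (Rle_not_lt _ _ y_far) Gy).
- rewrite pref_j split_j => -[a [Ga y_a]]; apply: (near_p_ne_y _ _ (esym y_a)).
  rewrite fword_cat; apply: image_near_p; apply: (attractor_fword HG) Ga.
  by rewrite /is_word /= N_gt0.
- by rewrite i_l; case.
- rewrite i_l pref_wk => -[N_gt1 [a [Ga y_a]]]; apply: (near_p_ne_y _ _ (esym y_a)).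
  rewrite -cats1 -catA fword_cat; apply: image_near_p; apply: (attractor_fword HG) Ga.
  by rewrite /is_word /= N_gt0 andbT; move: N_gt1; case: (N) => [|[|N']].
Qed.
End CylinderMissesB.

Lemma zipper0_vertices_fixed d N (A : nat -> Mat d) t z : zipper0 N A t z -> (0 < N)%N ->
  fmap A t 0 (z 0%N) = z 0%N /\ fmap A t N.-1 (z N) = z N.
Proof.
move=> [_ vertices] N_gt0; split; first exact: proj1 (vertices 0%N N_gt0).
by have := proj2 (vertices N.-1 (etrans (ltn_predL N) N_gt0)); rewrite prednK.
Qed.

Unset Implicit Arguments.

Theorem lemma3p1 (d N : nat) (A : nat -> Mat d) (t : nat -> Vec d) (z : nat -> Vec d)
  (G : Vec d -> Prop) (Mc : Vec d -> Prop) :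
  zipper0 N A t z -> is_attractor N A t G -> dominated_index1 N A Mc ->
  nondegenerate N A t z G Mc ->
  exists (n l m : nat) (j : seq nat),
    (1 <= n)%N /\ (1 <= l)%N /\ (1 <= m)%N /\ size j = l /\ all (fun i => (i < N)%N) j /\
    (forall ii, inB N A t G Mc n l m ii -> cylinder j ii -> False).
Proof.
move=> zipper HG [[Mc_cone Mc_open] _] [_ [w [w_word v_in_Mc]]].
have [c [c01 Hc]] := contraction_rate_uniform (fun i lt_iN => proj2 (proj1 zipper i lt_iN)).
have [R0 [G_bounded orbit_bounded]] := attractor_orbit_bounded HG c01 Hc.
have N_gt0 := attractor_alphabet_nonempty HG.
have [fix_z0 fix_zN] := zipper0_vertices_fixed zipper N_gt0.
have [eta [n [eta_gt0 [n_gt0 near_v]]]] :=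
  open_nbhs_bounded_below Mc_open v_in_Mc (proj1 Mc_cone _ v_in_Mc).
have [g [Gg g_near]] := attractor_near_fixed_point HG c01 Hc (etrans (ltn_predL N) N_gt0) fix_zN eta_gt0.
have [k Hk] := pow_mul_eventually_lt (R0 + vnorm (z 0%N)) c01 eta_gt0.
exists n, (size w + k.+1)%N, 1%N, (w ++ nseq k.+1 0%N).
split=> //; split; first by rewrite addnS.
split=> //; split; first by rewrite size_cat size_nseq.
split; first by rewrite all_cat w_word all_nseq N_gt0 orbT.
apply: (cylinder_misses_B c01 Hc HG G_bounded orbit_bounded (y := fword A t w g)
          (p := fword A t w (z 0%N)) (delta := eta)).
- exact: (attractor_fword HG w_word Gg).
- exact: n_gt0.
- move=> x x_near; have := near_v (vsub (fword A t w g) x); rewrite -(fword_vsub A t); apply.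
  apply: Rle_trans (dist_vsub_le _ _ _ _) _.
  by have := fword_dist_le c01 Hc g (z N) w_word; lra.
- move=> a a_le; rewrite fword_cat; apply: Rle_trans (fword_dist_le c01 Hc _ _ w_word) _.
  apply: Rle_trans (fword_nseq_dist_fixed c01 Hc k a N_gt0 fix_z0) _.
  have := Hk k (leqnn k); have := dist_le_vnorm a (z 0%N); have := pow_le c k (proj1 c01); nra.
Qed.
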